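(* Let $W\subset\mathbb R^m$ be a linear subspace, $\mathcal W\subset[m]$ a sample of the determinantal measure $\mathbb P^W$, $u\in[m]$, $k\ge1$ an integer and $\gamma\in(0,1/k)$. Suppose $\xi_1,\dots,\xi_k\in W$ satisfy (i) $|\xi_i(u)|=1$ for all $i\in[k]$, and (ii) $|\langle\xi_i,\xi_j\rangle|\le\gamma\min(\|\xi_i\|^2,\|\xi_j\|^2)$ for all $i\ne j$ in $[k]$. Then \[\mathbb P^W(u\in\mathcal W)\ge\Big(1-\frac{\gamma k}{1-\gamma k}\Big)\sum_{i=1}^k\frac{1}{\|\xi_i\|^2}.\]
   Context: For a linear subspace $W\subset\mathbb R^m$ with orthogonal projection $P_W$ (an $m\times m$ matrix), the determinantal measure $\mathbb P^W$ is the probability measure on subsets $\mathcal S\subset[m]$ of size $\dim W$ given by $\mathbb P^W(\mathcal S)=\det(P_W|_{\mathcal S})$, where $P_W|_{\mathcal S}$ is the principal submatrix indexed by $\mathcal S$. *)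

(* Vectors of R^m are row vectors 'rV[R]_m; a linear
   subspace W of R^m is represented (mxalgebra style) by the row space of a
   matrix W : 'M[R]_m. *)
From HB Require Import structures.
From mathcomp Require Import all_boot all_order all_algebra.
Set Implicit Arguments. Unset Strict Implicit. Unset Printing Implicit Defensive.
Import Order.TTheory GRing.Theory Num.Theory.
Local Open Scope ring_scope.

Definition dotv (R : realFieldType) (m : nat) (x y : 'rV[R]_m) : R :=
  \sum_(i < m) x 0 i * y 0 i.
Definition sqnorm (R : realFieldType) (m : nat) (x : 'rV[R]_m) : R := dotv x x.

Definition is_orth_proj (R : realFieldType) (m : nat) (W P : 'M[R]_m) : Prop :=
  [/\ P^T = P, P *m P = P & (P == W)%MS].

Definition principal_submx (R : realFieldType) (m : nat) (P : 'M[R]_m)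
  (S : {set 'I_m}) : 'M[R]_#|S| :=
  \matrix_(i < #|S|, j < #|S|) P (enum_val i) (enum_val j).

Definition detmeasure (R : realFieldType) (m : nat) (W P : 'M[R]_m)
  (S : {set 'I_m}) : R :=
  if #|S| == \rank W then \det (principal_submx P S) else 0.

Definition detprob_mem (R : realFieldType) (m : nat) (W P : 'M[R]_m)
  (u : 'I_m) : R :=
  \sum_(S : {set 'I_m} | u \in S) detmeasure W P S.

From HB Require Import structures.
From mathcomp Require Import all_boot all_order all_algebra all_fingroup.
From mathcomp Require Import ring lra.
Set Implicit Arguments. Unset Strict Implicit. Unset Printing Implicit Defensive.
Import Order.TTheory GRing.Theory Num.Theory.
Local Open Scope ring_scope.

(* The marginal P^W(u \in 𝒲) is the diagonal entry P u u.  Writing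
   P = B^T (B B^T)^-1 B for a basis B of W, the Cauchy-Binet formula turns the
   principal minors of P into squared maximal minors of B divided by
   det (B B^T); the minors avoiding column u sum to the Gram determinant of B
   with column u erased, which is det (B B^T) * (1 - P u u).
   On the other hand P u u = max_(v \in W) v(u)^2 / |v|^2.  The test vector
   v = \sum_i xi_i(u) / |xi_i|^2 * xi_i has v(u) = A := \sum_i 1 / |xi_i|^2,
   and near-orthogonality gives |v|^2 <= (1 + gamma k) A, hence
   P u u >= A / (1 + gamma k) >= (1 - gamma k / (1 - gamma k)) A. *)

Section InnerProduct.

Variables (R : realFieldType) (m : nat).
Implicit Types x y : 'rV[R]_m.

Lemma dotvE x y : dotv x y = (x *m y^T) 0 0.
Proof. by rewrite mxE; apply: eq_bigr => i _; rewrite mxE. Qed.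

Lemma sqnorm_ge0 x : 0 <= sqnorm x.
Proof. by rewrite sumr_ge0 // => i _; rewrite -expr2 sqr_ge0. Qed.

Lemma sqnorm_eq0 x : (sqnorm x == 0) = (x == 0).
Proof.
apply/eqP/eqP => [x0|->]; last by rewrite /sqnorm /dotv big1 // => i; rewrite mxE mul0r.
apply/rowP => i; rewrite mxE; apply/eqP; rewrite -sqrf_eq0 expr2; apply/eqP.
by apply: (psumr_eq0P _ x0) => // j _; rewrite -expr2 sqr_ge0.
Qed.

Lemma sqnorm_gt0 x : x != 0 -> 0 < sqnorm x.
Proof. by rewrite -sqnorm_eq0 lt_def sqnorm_ge0 andbT. Qed.

Lemma sqnorm_lincomb2 (p q : R) x y :
  sqnorm (p *: x + q *: y) =
  p ^+ 2 * sqnorm x + 2 * p * q * dotv x y + q ^+ 2 * sqnorm y.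
Proof.
rewrite /sqnorm /dotv !mulr_sumr -!big_split /=.
by apply: eq_bigr => i _; rewrite !mxE; ring.
Qed.

Lemma dotv_sqr_le x y : dotv x y ^+ 2 <= sqnorm x * sqnorm y.
Proof.
have [->|y0] := eqVneq y 0.
  have dot0 z : dotv z 0 = 0 by rewrite /dotv big1 // => i _; rewrite mxE mulr0.
  by rewrite /sqnorm !dot0 expr2 !mulr0.
have c0 := sqnorm_gt0 y0.
have := sqnorm_ge0 (sqnorm y *: x + (- dotv x y) *: y); rewrite sqnorm_lincomb2.
have -> : forall a b c : R, c ^+ 2 * a + 2 * c * - b * b + (- b) ^+ 2 * c =
    c * (a * c - b ^+ 2) by move=> a b c; ring.
by rewrite pmulr_rge0 // subr_ge0.
Qed.

Lemma sqnorm_sum k (c : 'I_k -> R) (x : 'I_k -> 'rV[R]_m) :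
  sqnorm (\sum_i c i *: x i) = \sum_i \sum_j c i * c j * dotv (x i) (x j).
Proof.
rewrite /sqnorm /dotv.
transitivity (\sum_(t < m) \sum_i \sum_j c i * c j * (x i 0 t * x j 0 t)).
  apply: eq_bigr => t _; rewrite !summxE big_distrl /=; apply: eq_bigr => i _.
  by rewrite big_distrr /=; apply: eq_bigr => j _; rewrite !mxE; ring.
rewrite exchange_big /=; apply: eq_bigr => i _.
by rewrite exchange_big /=; apply: eq_bigr => j _; rewrite big_distrr.
Qed.

End InnerProduct.

Section CauchyBinet.

Variables (R : comPzRingType) (r m : nat).

Lemma det_mulmx_ffun (A : 'M[R]_(r, m)) (B : 'M[R]_(m, r)) :
  \det (A *m B) =
  \sum_(f : {ffun 'I_r -> 'I_m}) (\prod_i A i (f i)) * \det (rowsub f B).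
Proof.
pose AB (s : 'S_r) i j := A i j * B j (s i).
transitivity (\sum_(s : 'S_r) \sum_(f : {ffun 'I_r -> 'I_m})
    (-1) ^+ s * \prod_i AB s i (f i)).
  apply: eq_bigr => s _; rewrite -big_distrr /= -(bigA_distr_bigA (AB s)) /=.
  by congr (_ * _); apply: eq_bigr => i _; rewrite mxE.
rewrite exchange_big /=; apply: eq_bigr => f _.
rewrite big_distrr /=; apply: eq_bigr => s _.
rewrite mulrCA big_split /=; congr (_ * (_ * _)).
by apply: eq_bigr => i _; rewrite mxE.
Qed.

Lemma det_rowsub_perm (f : 'I_r -> 'I_m) (s : 'S_r) (B : 'M[R]_(m, r)) :
  \det (rowsub (f \o s) B) = (-1) ^+ s * \det (rowsub f B).
Proof.
have -> : rowsub (f \o s) B = row_perm s (rowsub f B).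
  by apply/matrixP => i j; rewrite !mxE.
by rewrite row_permE det_mulmx det_perm.
Qed.

Lemma cauchy_binet (A : 'M[R]_(r, m)) (B : 'M[R]_(m, r)) :
  \det (A *m B) *+ r`! =
  \sum_(f : {ffun 'I_r -> 'I_m}) \det (colsub f A) * \det (rowsub f B).
Proof.
transitivity (\sum_(s : 'S_r) \sum_(f : {ffun 'I_r -> 'I_m})
   (-1) ^+ s * (\prod_i A i (f (s i))) * \det (rowsub f B)); last first.
  rewrite exchange_big /=; apply: eq_bigr => f _.
  rewrite /(\det (colsub f A)) big_distrl /=; apply: eq_bigr => s _.
  by congr (_ * _ * _); apply: eq_bigr => i _; rewrite mxE.
rewrite -card_Sn -sumr_const det_mulmx_ffun; apply: eq_bigr => s _.
(* Reindex by precomposition with s^-1, which turns the sign of the row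
   permutation of B into (-1)^s. *)
have sinj : injective (fun g : {ffun 'I_r -> 'I_m} => [ffun j => g ((s^-1)%g j)]).
  by move=> g1 g2 /ffunP g12; apply/ffunP => j; have := g12 (s j); rewrite !ffunE permK.
rewrite [RHS](reindex_inj sinj) /=; apply: eq_bigr => g _.
have -> : \prod_i A i ([ffun j => g ((s^-1)%g j)] (s i)) = \prod_i A i (g i).
  by apply: eq_bigr => i _; rewrite ffunE permK.
have -> : rowsub [ffun j => g ((s^-1)%g j)] B = rowsub (g \o (s^-1)%g) B.
  by apply/matrixP => i j; rewrite !mxE ffunE.
rewrite det_rowsub_perm odd_permV.
by rewrite mulrCA !mulrA -signr_addb addbb mul1r.
Qed.

Lemma cauchy_binet_gram (A : 'M[R]_(r, m)) :
  \det (A *m A^T) *+ r`! = \sum_(f : {ffun 'I_r -> 'I_m}) \det (colsub f A) ^+ 2.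
Proof.
rewrite cauchy_binet; apply: eq_bigr => f _.
have -> : rowsub f A^T = (colsub f A)^T by apply/matrixP => i j; rewrite !mxE.
by rewrite det_tr expr2.
Qed.

End CauchyBinet.

Section InjectiveIndexing.

Variables (r m : nat).
Implicit Types (f : 'I_r -> 'I_m) (S : {set 'I_m}).

Lemma card_imsetT_inj f : injective f -> #|f @: setT| = r.
Proof. by move=> finj; rewrite card_imset // cardsT card_ord. Qed.

Definition enum_set_ord S (eqS : #|S| = r) (i : 'I_r) : 'I_m :=
  enum_val (cast_ord (esym eqS) i).

Lemma enum_set_ord_inj S (eqS : #|S| = r) : injective (enum_set_ord eqS).
Proof. by move=> i j /enum_val_inj /cast_ord_inj. Qed.

Lemma inj_onto_enum_set_perm S (eqS : #|S| = r) f :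
  injective f -> f @: setT = S -> exists s : 'S_r, f =1 enum_set_ord eqS \o s.
Proof.
move=> finj fim.
have fS i : f i \in S by rewrite -fim imset_f ?in_setT.
pose g i := cast_ord eqS (enum_rank_in (fS i) (f i)).
have gK i : enum_set_ord eqS (g i) = f i.
  by rewrite /enum_set_ord /g cast_ordK (enum_rankK_in (fS i) (fS i)).
have ginj : injective g by move=> i j gij; apply: finj; rewrite -gK gij gK.
by exists (perm ginj) => i /=; rewrite permE gK.
Qed.

Lemma card_inj_onto S : #|S| = r ->
  #|[pred f : {ffun 'I_r -> 'I_m} | injectiveb f && (f @: setT == S)]| = r`!.
Proof.
move=> eqS; set e := enum_set_ord eqS.
pose phi (s : 'S_r) := [ffun i => e (s i)].
have phi_inj : injective phi.
  move=> s1 s2 /ffunP phi12; apply/permP => i.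
  by have := phi12 i; rewrite !ffunE => /enum_set_ord_inj.
rewrite -card_Sn -(card_image phi_inj); apply: eq_card => f; rewrite inE.
apply/andP/imageP => [[/injectiveP finj /eqP fim]|[s _ ->]].
  have [s fs] := inj_onto_enum_set_perm eqS finj fim.
  by exists s => //; apply/ffunP => i; rewrite ffunE fs.
have phis_inj : injective (phi s).
  by move=> i j; rewrite !ffunE => /enum_set_ord_inj /perm_inj.
split; first exact/injectiveP.
rewrite eqEcard card_imsetT_inj // eqS leqnn andbT.
by apply/subsetP => _ /imsetP [i _ ->]; rewrite ffunE enum_valP.
Qed.

Lemma sum_inj_ffun_imset (V : nmodType) (G : {set 'I_m} -> V) :
  \sum_(f : {ffun 'I_r -> 'I_m} | injectiveb f) G (f @: setT) =
  \sum_(S : {set 'I_m} | #|S| == r) G S *+ r`!.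
Proof.
rewrite (partition_big (fun f : {ffun 'I_r -> 'I_m} => f @: setT)
   (fun S => #|S| == r)) /=; last by move=> f /injectiveP /card_imsetT_inj ->.
apply: eq_bigr => S /eqP eqS; rewrite -(card_inj_onto eqS) -sumr_const.
by apply: eq_big => [f|f /andP [_ /eqP ->]]; rewrite ?inE.
Qed.

End InjectiveIndexing.

Lemma det_mxsub_perm (R : comPzRingType) r m (P : 'M[R]_m) (f : 'I_r -> 'I_m)
    (s : 'S_r) :
  \det (mxsub (f \o s) (f \o s) P) = \det (mxsub f f P).
Proof.
have -> : mxsub (f \o s) (f \o s) P = row_perm s (col_perm s (mxsub f f P)).
  by apply/matrixP => i j; rewrite !mxE.
rewrite row_permE col_permE !det_mulmx !det_perm odd_permV.
by rewrite mulrCA -signr_addb addbb mulr1.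
Qed.

Lemma det_castmx (R : comPzRingType) n1 n2 (e : n1 = n2) (A : 'M[R]_n1) :
  \det (castmx (e, e) A) = \det A.
Proof. by case: n2 / e; rewrite castmx_id. Qed.

Lemma det_mxsub_inj (R : realFieldType) r m (P : 'M[R]_m) (f : 'I_r -> 'I_m) :
  injective f -> \det (mxsub f f P) = \det (principal_submx P (f @: setT)).
Proof.
move=> finj; have eqS := card_imsetT_inj finj.
have [s fs] := inj_onto_enum_set_perm eqS finj erefl.
transitivity (\det (mxsub (enum_set_ord eqS) (enum_set_ord eqS) P)).
  rewrite -(det_mxsub_perm P (enum_set_ord eqS) s).
  by congr (\det _); apply/matrixP => i j; rewrite !mxE !fs.
by rewrite -(det_castmx eqS); congr (\det _); apply/matrixP => i j; rewrite castmxE !mxE.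
Qed.

Lemma sum_principal_minors (R : realFieldType) r m (P : 'M[R]_m)
    (p : pred {set 'I_m}) :
  \sum_(S : {set 'I_m} | (#|S| == r) && p S) \det (principal_submx P S) *+ r`! =
  \sum_(f : {ffun 'I_r -> 'I_m} | p (f @: setT)) \det (mxsub f f P).
Proof.
pose G S := if p S then \det (principal_submx P S) else 0.
transitivity (\sum_(S : {set 'I_m} | #|S| == r) G S *+ r`!).
  rewrite big_mkcondr /=; apply: eq_bigr => S _.
  by rewrite /G; case: (p S); rewrite ?mul0rn.
rewrite -(@sum_inj_ffun_imset r m _ G) big_mkcond [RHS]big_mkcond /=.
apply: eq_bigr => f _; rewrite /G; case: ifP => [/injectiveP finj|/injectivePn].
  by case: ifP => // _; rewrite det_mxsub_inj.
move=> [i1 [i2 ni12 fi12]]; case: ifP => // _.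
by apply/esym/(determinant_alternate ni12) => j; rewrite !mxE fi12.
Qed.

Lemma det_rank1_update (R : comPzRingType) n (x : 'cV[R]_n) (y : 'rV[R]_n) :
  \det (1%:M + x *m y) = 1 + (y *m x) 0 0.
Proof.
pose M := block_mx (1%:M : 'M[R]_n) (- x) y (1%:M : 'M[R]_1).
have M_ut : M = block_mx 1%:M 0 y 1%:M *m block_mx 1%:M (- x) 0 (1%:M + y *m x).
  rewrite mulmx_block !mulmx0 !mul0mx !mulmx1 !mul1mx ?addr0 ?add0r.
  by rewrite /M mulmxN addrCA addNr addr0.
have M_lt : M = block_mx (1%:M + x *m y) (- x) 0 1%:M *m block_mx 1%:M 0 y 1%:M.
  rewrite mulmx_block !mulmx0 !mul0mx !mulmx1 !mul1mx ?addr0 ?add0r.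
  by rewrite mulNmx -addrA subrr addr0.
have := congr1 determinant M_ut; rewrite {1}M_lt !det_mulmx ?det_lblock ?det_ublock.
by rewrite !det1 !mul1r !mulr1 det_mx11 => ->; rewrite !mxE eqxx.
Qed.

Section ProjectionMarginal.

Variables (R : realFieldType) (m r : nat) (B : 'M[R]_(r, m)) (P : 'M[R]_m).
Hypotheses (PT : P^T = P) (PP : P *m P = P).
Hypotheses (B_free : row_free B) (eqBP : (B :=: P)%MS).

Let G := B *m B^T.

Lemma gram_unitmx : G \in unitmx.
Proof.
rewrite -row_free_unit; apply/inj_row_free => v vG0.
have : sqnorm (v *m B) = 0.
  by rewrite /sqnorm dotvE trmx_mul mulmxA -(mulmxA v) vG0 mul0mx mxE.
by move/eqP; rewrite sqnorm_eq0 -(mul0mx _ B) => /eqP /(row_free_inj B_free).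
Qed.

Lemma proj_gramE : P = B^T *m invmx G *m B.
Proof.
have /submxP [X BX] : (B <= P)%MS by rewrite eqBP.
have /submxP [Y PY] : (P <= B)%MS by rewrite -eqBP.
have PYT : P = B^T *m Y^T by rewrite -PT PY trmx_mul.
have GY : G *m Y^T = B by rewrite /G -mulmxA -PYT BX -mulmxA PP.
by rewrite -mulmxA -{2}GY mulKmx ?gram_unitmx.
Qed.

Lemma det_mxsub_proj (f : 'I_r -> 'I_m) :
  \det (mxsub f f P) = \det (colsub f B) ^+ 2 / \det G.
Proof.
rewrite {1}proj_gramE mxsub_mul -mul_rowsub_mx !det_mulmx det_inv.
have -> : rowsub f B^T = (colsub f B)^T by apply/matrixP => i j; rewrite !mxE.
by rewrite det_tr mulrAC -expr2.
Qed.

Variable u : 'I_m.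

Let Bu := \matrix_(i, j) (if j == u then 0 else B i j) : 'M[R]_(r, m).

Lemma sum_sqr_det_colsub_mem :
  \sum_(f : {ffun 'I_r -> 'I_m} | u \in f @: setT) \det (colsub f B) ^+ 2 =
  (\det G - \det (Bu *m Bu^T)) *+ r`!.
Proof.
rewrite mulrnBl !cauchy_binet_gram.
rewrite [in RHS](bigID [pred f : {ffun 'I_r -> 'I_m} | u \in f @: setT]) /=.
suff -> : \sum_(f : {ffun 'I_r -> 'I_m}) \det (colsub f Bu) ^+ 2 =
    \sum_(f : {ffun 'I_r -> 'I_m} | u \notin f @: setT) \det (colsub f B) ^+ 2.
  by rewrite addrK.
rewrite [RHS]big_mkcond; apply: eq_bigr => f _.
case: ifP => [nu|/negbT /negPn /imsetP [j0 _ uf]].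
  congr (\det _ ^+ 2); apply/matrixP => i j; rewrite !mxE.
  by case: eqP => // fu; case/negP: nu; rewrite -fu imset_f ?in_setT.
rewrite (expand_det_col _ j0) big1 ?expr0n // => i _.
by rewrite !mxE -uf eqxx mul0r.
Qed.

Lemma det_gram_col_zeroed : \det (Bu *m Bu^T) = \det G * (1 - P u u).
Proof.
pose b := col u B.
have BuE : Bu *m Bu^T = G - b *m b^T.
  apply/matrixP => i k; rewrite !mxE (bigD1 u) //= [in X in _ = X - _](bigD1 u) //=.
  rewrite big_ord1 !mxE eqxx mul0r add0r addrAC subrr add0r.
  by apply: eq_bigr => j /negPf nj; rewrite !mxE nj.
have Puu : P u u = (b^T *m invmx G *m b) 0 0.
  rewrite {1}proj_gramE !mxE; apply: eq_bigr => l _; rewrite !mxE; congr (_ * _).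
  by apply: eq_bigr => k _; rewrite !mxE.
rewrite BuE (_ : G - b *m b^T = G *m (1%:M + (- (invmx G *m b)) *m b^T)); last first.
  by rewrite mulmxDr mulmx1 mulNmx mulmxN !mulmxA mulmxV ?gram_unitmx // mul1mx.
by rewrite det_mulmx det_rank1_update Puu mulmxN mxE mulmxA.
Qed.

Lemma sum_principal_minors_mem_proj :
  \sum_(S : {set 'I_m} | (#|S| == r) && (u \in S)) \det (principal_submx P S) = P u u.
Proof.
have dG0 : \det G != 0 by rewrite -unitfE -unitmxE gram_unitmx.
apply/eqP; rewrite -(eqr_pMn2r (fact_gt0 r)) -sumrMnl.
rewrite (@sum_principal_minors _ r m P (fun S => u \in S)).
under eq_bigr do rewrite det_mxsub_proj.
rewrite -mulr_suml sum_sqr_det_colsub_mem det_gram_col_zeroed mulrnAl.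
by apply/eqP; congr (_ *+ _); field.
Qed.

End ProjectionMarginal.

Lemma detprob_mem_proj (R : realFieldType) m (W P : 'M[R]_m) (u : 'I_m) :
  is_orth_proj W P -> detprob_mem W P u = P u u.
Proof.
move=> [PT PP eqPW]; have eqr := eqmx_rank eqPW.
pose B := castmx (eqr, erefl m) (row_base P).
rewrite -(@sum_principal_minors_mem_proj R m (\rank W) B P PT PP); first last.
- exact: eqmx_trans (eqmx_cast _ _) (eq_row_base P).
- by rewrite /B row_free_castmx row_base_free.
rewrite /detprob_mem /detmeasure big_mkcond [RHS]big_mkcond /=.
by apply: eq_bigr => S _; rewrite andbC; case: (u \in S).
Qed.

Lemma proj_diagE (R : realFieldType) m (P : 'M[R]_m) (u : 'I_m) :
  P^T = P -> P *m P = P -> P u u = sqnorm (row u P).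
Proof.
move=> PT PP.
by rewrite /sqnorm dotvE tr_row PT rowE colE !mulmxA -(mulmxA _ P P) PP -rowE -colE !mxE.
Qed.

Lemma proj_diag_ge (R : realFieldType) m (P : 'M[R]_m) (u : 'I_m) (v : 'rV[R]_m) :
  P^T = P -> P *m P = P -> v *m P = v -> v 0 u ^+ 2 <= sqnorm v * P u u.
Proof.
move=> PT PP vP.
have dot_v : dotv v (row u P) = v 0 u.
  by rewrite dotvE tr_row PT colE mulmxA vP -colE mxE.
by have := dotv_sqr_le v (row u P); rewrite dot_v -proj_diagE.
Qed.

Section NearlyOrthogonal.

Variables (R : realFieldType) (m k : nat) (gamma : R) (x : 'I_k -> 'rV[R]_m).
Hypotheses (gamma_ge0 : 0 <= gamma) (x_neq0 : forall i, x i != 0).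
Hypothesis x_near_orth : forall i j, i != j ->
  `|dotv (x i) (x j)| <= gamma * Num.min (sqnorm (x i)) (sqnorm (x j)).

Let n i := sqnorm (x i).

Lemma near_orth_term_le (c : 'I_k -> R) i j :
  (forall i, `|c i| <= (n i)^-1) ->
  c i * c j * dotv (x i) (x j) <= (if j == i then (n i)^-1 else 0) + gamma / n i.
Proof.
move=> c_le; have n_gt0 l : 0 < n l := sqnorm_gt0 (x_neq0 l).
have c_ge0 l : 0 <= (n l)^-1 by rewrite invr_ge0 ltW.
apply: le_trans (ler_norm _) _; rewrite !normrM.
case: eqVneq => [->|ji].
  rewrite [`|dotv _ _|]ger0_norm; last exact: sqnorm_ge0.
  have : `|c i| * `|c i| * n i <= (n i)^-1 * (n i)^-1 * n i.
    by rewrite ler_wpM2r ?sqnorm_ge0 // ler_pM.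
  rewrite -[X in _ <= X]mulrA mulVf ?gt_eqF // mulr1 => le_diag.
  by apply: le_trans le_diag _; rewrite lerDl mulr_ge0.
have dij : `|dotv (x i) (x j)| <= gamma * n j.
  apply: le_trans (x_near_orth _) _; first by rewrite eq_sym.
  by rewrite ler_wpM2l // ge_min lexx orbT.
rewrite add0r; apply: le_trans (_ : _ <= (n i)^-1 * (n j)^-1 * (gamma * n j)) _.
  by rewrite ler_pM ?mulr_ge0 // ler_pM.
suff -> : (n i)^-1 * (n j)^-1 * (gamma * n j) = gamma / n i by [].
by field; rewrite !gt_eqF.
Qed.

Lemma sqnorm_near_orth_sum_le (c : 'I_k -> R) :
  (forall i, `|c i| <= (n i)^-1) ->
  sqnorm (\sum_i c i *: x i) <= (1 + gamma * k%:R) * \sum_i (n i)^-1.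
Proof.
move=> c_le; rewrite sqnorm_sum mulr_sumr; apply: ler_sum => i _.
apply: le_trans (ler_sum _ (fun j _ => near_orth_term_le i j c_le)) _.
rewrite big_split /= -big_mkcond big_pred1_eq sumr_const card_ord.
by rewrite mulrDl mul1r mulrAC mulr_natr.
Qed.

End NearlyOrthogonal.

Lemma one_sub_ratio_le_inv (R : realFieldType) (x : R) :
  0 <= x -> x < 1 -> 1 - x / (1 - x) <= (1 + x)^-1.
Proof.
move=> x_ge0 x_lt1; rewrite -subr_ge0.
have xp : 0 < 1 + x by lra.
have xm : 0 < 1 - x by lra.
have -> : (1 + x)^-1 - (1 - x / (1 - x)) = 2 * x ^+ 2 / ((1 + x) * (1 - x)).
  by field; rewrite !gt_eqF.
by apply: divr_ge0; rewrite mulr_ge0 ?sqr_ge0 ?ltW.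
Qed.

Lemma sum_inv_sqnorm_le_proj_diag (R : realFieldType) m k (gamma : R)
    (P : 'M[R]_m) (u : 'I_m) (xi : 'I_k -> 'rV[R]_m) :
  P^T = P -> P *m P = P -> 0 <= gamma ->
  (forall i, xi i *m P = xi i) -> (forall i, `|xi i 0 u| = 1) ->
  (forall i j, i != j ->
     `|dotv (xi i) (xi j)| <= gamma * Num.min (sqnorm (xi i)) (sqnorm (xi j))) ->
  \sum_i (sqnorm (xi i))^-1 <= (1 + gamma * k%:R) * P u u.
Proof.
move=> PT PP gamma_ge0 xiP xiu xi_near.
have xi_neq0 i : xi i != 0.
  apply/eqP => xi0; have := xiu i.
  by rewrite xi0 mxE normr0 => /eqP; rewrite eq_sym oner_eq0.
have xiu2 i : xi i 0 u ^+ 2 = 1 by apply/eqP; rewrite sqr_norm_eq1 xiu.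
pose c i := xi i 0 u / sqnorm (xi i); pose v := \sum_i c i *: xi i.
set A := \sum_i _.
have vu : v 0 u = A.
  by rewrite summxE; apply: eq_bigr => i _; rewrite mxE mulrAC -expr2 xiu2 mul1r.
have vP : v *m P = v.
  by rewrite mulmx_suml; apply: eq_bigr => i _; rewrite -scalemxAl xiP.
have c_le i : `|c i| <= (sqnorm (xi i))^-1.
  by rewrite normrM normfV xiu mul1r gtr0_norm ?sqnorm_gt0.
have v_le := sqnorm_near_orth_sum_le gamma_ge0 xi_neq0 xi_near c_le.
have Puu_ge0 : 0 <= P u u by rewrite (proj_diagE u PT PP) sqnorm_ge0.
have := proj_diag_ge u PT PP vP; rewrite vu expr2.
have [A_gt0 AA|] := ltrP 0 A.
  rewrite -(ler_pM2l A_gt0); apply: le_trans AA _.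
  by rewrite mulrA ler_wpM2r // mulrC.
by move=> A_le0 _; apply: le_trans A_le0 _; rewrite mulr_ge0 ?addr_ge0 ?mulr_ge0.
Qed.

Theorem corollary2p13 (R : realFieldType) (m : nat) (W P : 'M[R]_m)
  (u : 'I_m) (k : nat) (gamma : R) (xi : 'I_k -> 'rV[R]_m) :
  is_orth_proj W P ->
  (0 < k)%N ->
  0 < gamma -> gamma < 1 / k%:R ->
  (forall i, (xi i <= W)%MS) ->
  (forall i, `|xi i 0 u| = 1) ->
  (forall i j, i != j ->
     `|dotv (xi i) (xi j)| <= gamma * Num.min (sqnorm (xi i)) (sqnorm (xi j))) ->
  detprob_mem W P u >=
    (1 - gamma * k%:R / (1 - gamma * k%:R)) * \sum_(i < k) 1 / sqnorm (xi i).
Proof.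
move=> orthP k_gt0 gamma_gt0 gamma_lt xiW xiu xi_near.
have [PT PP /andP [_ sWP]] := orthP.
have xiP i : xi i *m P = xi i.
  by have /submxP [X ->] := submx_trans (xiW i) sWP; rewrite -mulmxA PP.
have x_lt1 : gamma * k%:R < 1 by rewrite -ltr_pdivlMr ?ltr0n // -div1r.
have x_ge0 : 0 <= gamma * k%:R by rewrite mulr_ge0 ?ler0n ?ltW.
have A_le := sum_inv_sqnorm_le_proj_diag PT PP (ltW gamma_gt0) xiP xiu xi_near.
rewrite detprob_mem_proj //; under eq_bigr do rewrite div1r.
apply: le_trans (_ : _ <= (1 + gamma * k%:R)^-1 * \sum_i (sqnorm (xi i))^-1) _.
  apply: ler_wpM2r; last exact: one_sub_ratio_le_inv.
  by rewrite sumr_ge0 // => i _; rewrite invr_ge0 sqnorm_ge0.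
by rewrite ler_pdivrMl // ltr_wpDr.
Qed.
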